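(* Let $\mathbb F$ be a field, $q(x_1,\dots,x_6)=x_1x_2+x_3x_4+x_5x_6$ on $\mathbb F^6$, and let $Q^+(5,\mathbb F)$ be its polar space with line-Grassmannian $Q^+_2(5,\mathbb F)$. Then for every proper subfield $\mathbb F_0$ of $\mathbb F$, the line-Grassmannian $Q^+_2(5,\mathbb F)$ is not $\mathbb F_0$-generated.
   Context: For a subfield $\mathbb F_0$, the same polynomial defines a quadratic form on $\mathbb F_0^6\subseteq\mathbb F^6$ with polar space $Q^+(5,\mathbb F_0)$. Every totally singular 2-dimensional $\mathbb F_0$-subspace $L$ of $\mathbb F_0^6$ spans over $\mathbb F$ a totally singular 2-dimensional subspace $\langle L\rangle_{\mathbb F}$ of $\mathbb F^6$. The line-Grassmannian $Q^+_2(5,\mathbb F)$ has as points the totally singular 2-dimensional subspaces of $\mathbb F^6$ and as lines the sets $\{Z: X\subset Z\subset Y\}$ of such subspaces, for $X$ a totally singular 1-space and $Y$ a totally singular 3-space with $X\subset Y$. A subspace of a point-line geometry is a set of points containing every line that meets it in at least two points; the span is the smallest subspace containing a set. $Q^+_2(5,\mathbb F)$ is $\mathbb F_0$-generated if the span of $\{\langle L\rangle_{\mathbb F}: L \text{ a line of } Q^+(5,\mathbb F_0)\}$ in $Q^+_2(5,\mathbb F)$ is the whole point set. *)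

From HB Require Import structures.
From mathcomp Require Import all_boot all_order all_algebra.
Set Implicit Arguments. Unset Strict Implicit. Unset Printing Implicit Defensive.
Import GRing.Theory.
Local Open Scope ring_scope.

(* The quadratic form q(x1,...,x6) = x1 x2 + x3 x4 + x5 x6 on K^6 (0-indexed). *)
Definition qf (K : fieldType) (v : 'rV[K]_6) : K :=
  v 0 (inord 0) * v 0 (inord 1) + v 0 (inord 2) * v 0 (inord 3)
  + v 0 (inord 4) * v 0 (inord 5).

Definition tot_sing (K : fieldType) (U : {vspace 'rV[K]_6}) : Prop :=
  forall v, v \in U -> qf v = 0.

Definition ts_sub (K : fieldType) (k : nat) (U : {vspace 'rV[K]_6}) : Prop :=
  (\dim U = k)%N /\ tot_sing U.

Definition grass_point (K : fieldType) (Z : {vspace 'rV[K]_6}) : Prop := ts_sub 2 Z.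

Definition grass_line (K : fieldType) (l : {vspace 'rV[K]_6} -> Prop) : Prop :=
  exists X Y : {vspace 'rV[K]_6},
    [/\ ts_sub 1 X, ts_sub 3 Y, (X <= Y)%VS &
        forall Z, l Z <-> (grass_point Z /\ (X <= Z)%VS /\ (Z <= Y)%VS)].

Definition grass_subspace (K : fieldType) (T : {vspace 'rV[K]_6} -> Prop) : Prop :=
  (forall Z, T Z -> grass_point Z) /\
  forall l, grass_line l ->
    (exists Z1 Z2, [/\ Z1 <> Z2, l Z1, T Z1, l Z2 & T Z2]) ->
    forall Z, l Z -> T Z.

Definition in_grass_span (K : fieldType) (A : {vspace 'rV[K]_6} -> Prop)
    (Z : {vspace 'rV[K]_6}) : Prop :=
  forall T, grass_subspace T -> (forall W, A W -> T W) -> T Z.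

(* The subfield F0 is given as an embedding f : F0 -> F.
   F-span <L>_F of an F0-subspace L of F0^6 (spanned by the images of a basis). *)
Definition ext_span (F0 F : fieldType) (f : {rmorphism F0 -> F})
    (L : {vspace 'rV[F0]_6}) : {vspace 'rV[F]_6} :=
  (<< [seq map_mx f v | v <- vbasis L] >>)%VS.

Definition ext_lines (F0 F : fieldType) (f : {rmorphism F0 -> F})
    (W : {vspace 'rV[F]_6}) : Prop :=
  exists L : {vspace 'rV[F0]_6}, ts_sub 2 L /\ W = ext_span f L.

Definition F0_generated (F0 F : fieldType) (f : {rmorphism F0 -> F}) : Prop :=
  forall Z, grass_point Z -> in_grass_span (ext_lines f) Z.

From HB Require Import structures.
From mathcomp Require Import all_boot all_order all_algebra.
From mathcomp Require Import fingroup perm ring zify.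
From Stdlib Require Import Classical.
Set Implicit Arguments. Unset Strict Implicit. Unset Printing Implicit Defensive.
Import GRing.Theory.
Local Open Scope ring_scope.

(* Write F0 for the image of the embedding f and call a vector
   of F^6 rational if it is the image of a vector of F0^6.  Let T be the set
   of points Z of Q^+_2(5,F) such that either Z contains a nonzero rational
   vector, or Z lies in a totally singular 3-space spanned by three
   independent rational vectors (a "rational plane"); T is rat_locus below.
   1. T contains every extended line <L>_F (it contains rational vectors).
   2. T is a subspace: if two distinct points Z1, Z2 of a line
      {Z : X <= Z <= Y} lie in T, then either X contains a rational vector
      or Y is a rational plane, and in both cases the whole line lies in T.
      This rests on the non-degeneracy of the polar form of q (so that
      totally singular subspaces have dimension <= 3), on a hyperbolic-pair
      construction over F0, and on linear systems with coefficients in F0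
      having rational solutions whenever they have solutions over F.
   3. For t in F outside F0, the point <e3 + t e6, e5 - t e4> is not in T.
   Hence the span of the extended lines misses a point. *)

Section PolarForm.
Variable K : fieldType.
Implicit Types x y z : 'rV[K]_6.

Lemma big_ord6 (g : 'I_6 -> K) : \sum_k g k =
  g (inord 0) + g (inord 1) + g (inord 2) + g (inord 3) + g (inord 4) + g (inord 5).
Proof.
rewrite !big_ord_recl big_ord0 addr0 !addrA.
by do !congr (_ + _); congr g; apply: val_inj; rewrite /= inordK.
Qed.

Definition swap_pair (k : 'I_6) : 'I_6 := inord (if odd k then k.-1 else k.+1).

Lemma swap_pairK : involutive swap_pair.
Proof.
by move=> [[|[|[|[|[|[|i]]]]]] Hi] //; apply: val_inj; rewrite /swap_pair /= !inordK.
Qed.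

Definition pair_swap : 'S_6 := perm (inv_inj swap_pairK).

Lemma pair_swapK (k : 'I_6) : pair_swap (pair_swap k) = k.
Proof. by rewrite !permE swap_pairK. Qed.

Lemma pair_swapE (i : nat) : (i < 6)%N ->
  pair_swap (inord i) = inord (if odd i then i.-1 else i.+1).
Proof. by move=> Hi; rewrite permE /swap_pair inordK. Qed.

(* The polar form b(x, y) = q(x + y) - q(x) - q(y), written as x J y^T for
   the permutation matrix J of pair_swap. *)
Definition polar x y := \sum_k x 0 k * y 0 (pair_swap k).

Lemma polar_expand x y : polar x y =
  x 0 (inord 0) * y 0 (inord 1) + x 0 (inord 1) * y 0 (inord 0) +
  x 0 (inord 2) * y 0 (inord 3) + x 0 (inord 3) * y 0 (inord 2) +
  x 0 (inord 4) * y 0 (inord 5) + x 0 (inord 5) * y 0 (inord 4).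
Proof. by rewrite /polar big_ord6 !pair_swapE. Qed.

Lemma qfD x y : qf (x + y) = qf x + qf y + polar x y.
Proof. rewrite polar_expand /qf !mxE; ring. Qed.

Lemma qfZ a x : qf (a *: x) = a ^+ 2 * qf x.
Proof. rewrite /qf !mxE; ring. Qed.

Lemma qfN x : qf (- x) = qf x.
Proof. rewrite /qf !mxE; ring. Qed.

Lemma polarC x y : polar x y = polar y x.
Proof. rewrite !polar_expand; ring. Qed.

Lemma polarDl x y z : polar (x + y) z = polar x z + polar y z.
Proof. rewrite !polar_expand !mxE; ring. Qed.

Lemma polarDr x y z : polar z (x + y) = polar z x + polar z y.
Proof. rewrite !polar_expand !mxE; ring. Qed.

Lemma polarZl a x y : polar (a *: x) y = a * polar x y.
Proof. rewrite !polar_expand !mxE; ring. Qed.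

Lemma polarZr a x y : polar y (a *: x) = a * polar y x.
Proof. rewrite !polar_expand !mxE; ring. Qed.

Lemma polarNr x y : polar y (- x) = - polar y x.
Proof. rewrite !polar_expand !mxE; ring. Qed.

Lemma polar0r y : polar y 0 = 0.
Proof. rewrite !polar_expand !mxE; ring. Qed.

Lemma polarxx x : polar x x = qf x *+ 2.
Proof. rewrite polar_expand /qf; ring. Qed.

End PolarForm.

Section ExplicitSpans.
Variables (K : fieldType) (n : nat).
Implicit Types v w : 'rV[K]_n.

Lemma mem_span_cons w v X : w \in <<v :: X>>%VS ->
  exists c w', w' \in <<X>>%VS /\ w = c *: v + w'.
Proof.
rewrite span_cons => /memv_addP [u /vlineP [c ->] [w' Hw' ->]].
by exists c, w'.
Qed.

Lemma mem_span2 w a b : w \in <<[:: a; b]>>%VS -> exists c d, w = c *: a + d *: b.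
Proof.
move=> /mem_span_cons [c [w' [/mem_span_cons [d [w'' [H ->]]] ->]]].
by move: H; rewrite span_nil memv0 => /eqP ->; exists c, d; rewrite addr0.
Qed.

Lemma mem_span3 w a b c : w \in <<[:: a; b; c]>>%VS ->
  exists c1 c2 c3, w = c1 *: a + c2 *: b + c3 *: c.
Proof.
move=> /mem_span_cons [c1 [w' [/mem_span2 [c2 [c3 ->]] ->]]].
by exists c1, c2, c3; rewrite addrA.
Qed.

Lemma dim_add_line (U : {vspace 'rV[K]_n}) v :
  v \notin U -> \dim (U + <[v]>) = (\dim U).+1.
Proof.
move=> vU; have vn0 : v != 0 by apply: contraNneq vU => ->; rewrite mem0v.
have := dimv_sum_cap U <[v]>; rewrite dim_vline vn0.
have : (\dim (U :&: <[v]>) < 1)%N.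
  have := dimv_leqif_eq (capvSr U <[v]>); rewrite dim_vline vn0 => H.
  rewrite (ltn_leqif H); apply/negP => /eqP E.
  by move: vU; rewrite memvE -E capvSl.
lia.
Qed.

Lemma capv_hyperplane (A B C : {vspace 'rV[K]_n}) : (C <= A)%VS -> (C <= B)%VS ->
  A <> B -> \dim A = (\dim C).+1 -> \dim B = (\dim C).+1 -> (A :&: B)%VS = C.
Proof.
move=> CA CB AB dA dB.
have CAB : (C <= A :&: B)%VS by rewrite subv_cap CA CB.
have : (\dim (A :&: B) < \dim A)%N.
  rewrite (ltn_leqif (dimv_leqif_eq (capvSl A B))); apply/negP => /eqP E.
  have AB' : (A <= B)%VS by rewrite -E capvSr.
  by apply: AB; apply/eqP; rewrite eqEdim AB' dA dB leqnn.
by move=> H; apply/eqP; rewrite eq_sym eqEdim CAB /=; lia.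
Qed.

Lemma nonzero_vector (U : {vspace 'rV[K]_n}) : (0 < \dim U)%N ->
  exists2 x, x \in U & x != 0.
Proof.
move=> dU; have : ~~ (U <= 0)%VS by apply/negP => /dimvS; rewrite dimv0; lia.
by move=> /subvPn [x xU]; rewrite memv0 => xn0; exists x.
Qed.

Lemma span3_full (P : {vspace 'rV[K]_n}) v1 v2 v3 : \dim P = 3 ->
  free [:: v1; v2; v3] -> v1 \in P -> v2 \in P -> v3 \in P ->
  <<[:: v1; v2; v3]>>%VS = P.
Proof.
move=> dP fv P1 P2 P3; apply/eqP; rewrite eqEdim (eqP fv) dP leqnn andbT.
by apply/span_subvP => v; rewrite !inE => /or3P [] /eqP ->.
Qed.

Lemma free3_coef0 v1 v2 v3 c1 c2 c3 : free [:: v1; v2; v3] ->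
  c1 *: v1 + c2 *: v2 + c3 *: v3 = 0 -> [/\ c1 = 0, c2 = 0 & c3 = 0].
Proof.
move=> /freeP H E.
have := H (fun i : 'I_3 => [:: c1; c2; c3]`_i).
rewrite !big_ord_recl big_ord0 /= addr0 addrA E => /(_ erefl) c0.
by split; [exact: (c0 0) | exact: (c0 1) | exact: (c0 2)].
Qed.

End ExplicitSpans.

Section LinearSystems.
Variable K : fieldType.

Lemma left_kernel_nonzero m n (A : 'M[K]_(m, n)) : ~~ row_free A ->
  exists2 w : 'rV_m, w != 0 & w *m A = 0.
Proof.
rewrite -kermx_eq0 => /rowV0Pn [v vk vn0]; exists v => //.
exact/sub_kermxP.
Qed.

Lemma big_ord3 (g : 'I_3 -> K) : \sum_k g k = g (inord 0) + g (inord 1) + g (inord 2).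
Proof.
rewrite !big_ord_recl big_ord0 addr0 !addrA.
by do !congr (_ + _); congr g; apply: val_inj; rewrite /= inordK.
Qed.

Definition dot3 (x c : 'rV[K]_3) : K := (x *m c^T) 0 0.

Lemma dot3_expand (x c : 'rV[K]_3) : dot3 x c = x 0 (inord 0) * c 0 (inord 0) +
   x 0 (inord 1) * c 0 (inord 1) + x 0 (inord 2) * c 0 (inord 2).
Proof. by rewrite /dot3 mxE big_ord3 !mxE. Qed.

Lemma common_zero3 (c1 c2 : 'rV[K]_3) :
  exists2 x : 'rV_3, x != 0 & dot3 x c1 = 0 /\ dot3 x c2 = 0.
Proof.
have [|x xn0 Hx] := @left_kernel_nonzero 3 (1 + 1) (col_mx c1 c2)^T.
  by rewrite /row_free; have := rank_leq_col (col_mx c1 c2)^T; lia.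
exists x => //; move: Hx; rewrite tr_col_mx mul_mx_row => /eqP.
by rewrite -row_mx0 => /eqP /eq_row_mx [H1 H2]; rewrite /dot3 H1 H2 !mxE.
Qed.

Lemma row3_eq0 (x : 'rV[K]_3) :
  x 0 (inord 0) = 0 -> x 0 (inord 1) = 0 -> x 0 (inord 2) = 0 -> x = 0.
Proof.
move=> h0 h1 h2; apply/rowP => i; rewrite mxE.
case: i => [[|[|[|i]]] Hi] //.
- by rewrite -h0; congr (x 0 _); apply/val_inj; rewrite /= inordK.
- by rewrite -h1; congr (x 0 _); apply/val_inj; rewrite /= inordK.
- by rewrite -h2; congr (x 0 _); apply/val_inj; rewrite /= inordK.
Qed.

Lemma row6_eq0 (x : 'rV[K]_6) : (forall k, (k < 6)%N -> x 0 (inord k) = 0) -> x = 0.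
Proof.
move=> H; apply/rowP => i; rewrite mxE.
have -> : i = inord i by apply/val_inj; rewrite /= inordK.
exact: H.
Qed.

End LinearSystems.

Section TotallySingular.
Variable K : fieldType.
Implicit Types (x y : 'rV[K]_6) (U V : {vspace 'rV[K]_6}).

Lemma polar_span x (X : seq 'rV[K]_6) : (forall v, v \in X -> polar x v = 0) ->
  forall w, w \in <<X>>%VS -> polar x w = 0.
Proof.
elim: X => [|v X IH] H w.
  by rewrite span_nil memv0 => /eqP ->; rewrite polar0r.
move=> /mem_span_cons [c [w' [Hw' ->]]].
rewrite polarDr polarZr H ?mem_head // IH ?mulr0 ?add0r // => u Hu.
by apply: H; rewrite inE Hu orbT.
Qed.

Definition rows_mx (s : seq 'rV[K]_6) : 'M[K]_(size s, 6) := \matrix_(i, j) s`_i 0 j.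

Lemma row_free_rows_mx s : free s -> row_free (rows_mx s).
Proof.
move=> fs; apply: inj_row_free => v Hv.
have := (@freeP _ _ _ (in_tuple s) fs) (fun i => v 0 i).
have -> : \sum_(i < size s) v 0 i *: (in_tuple s)`_i = v *m rows_mx s.
  rewrite mulmx_sum_row; apply: eq_bigr => i _.
  by congr (_ *: _); apply/rowP => j; rewrite !mxE.
by rewrite Hv => /(_ erefl) H; apply/rowP => i; rewrite mxE; exact: H.
Qed.

(* Non-degeneracy: two free families orthogonal to each other have at most
   six vectors in total. *)
Lemma orthogonal_free_size (sA sB : seq 'rV[K]_6) : free sA -> free sB ->
  (forall a b, a \in sA -> b \in sB -> polar a b = 0) ->
  (size sA + size sB <= 6)%N.
Proof.
move=> fA fB H.
have H0 : rows_mx sA *m (col_perm pair_swap (rows_mx sB))^T = 0.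
  apply/matrixP => i j; rewrite !mxE.
  transitivity (polar sA`_i sB`_j); last by rewrite H ?mem_nth.
  by rewrite /polar; apply: eq_bigr => k _; rewrite !mxE.
have := mulmx0_rank_max H0.
rewrite mxrank_tr col_permE mxrankMfree; last by rewrite row_free_unit unitmx_perm.
by rewrite (eqP (row_free_rows_mx fA)) (eqP (row_free_rows_mx fB)).
Qed.

Lemma ts_polar U u v : tot_sing U -> u \in U -> v \in U -> polar u v = 0.
Proof.
move=> tsU uU vU; have := tsU (u + v) (memvD uU vU).
by rewrite qfD (tsU u uU) (tsU v vU) !add0r.
Qed.

Lemma ts_dim_le3 U : tot_sing U -> (\dim U <= 3)%N.
Proof.
move=> tsU; have fb := basis_free (vbasisP U).
have := orthogonal_free_size fb fb
  (fun a b Ha Hb => ts_polar tsU (vbasis_mem Ha) (vbasis_mem Hb)).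
by rewrite size_tuple; lia.
Qed.

Lemma ts_addv U V : tot_sing U -> tot_sing V ->
  (forall u v, u \in U -> v \in V -> polar u v = 0) -> tot_sing (U + V).
Proof.
move=> tU tV H w /memv_addP [u Hu [v Hv ->]].
by rewrite qfD tU // tV // H // !addr0.
Qed.

Lemma ts3_maximal (P : {vspace 'rV[K]_6}) r : ts_sub 3 P -> qf r = 0 ->
  (forall p, p \in P -> polar p r = 0) -> r \in P.
Proof.
move=> [dP tP] qr H; apply/negPn/negP => rP.
have tr : tot_sing <[r]> by move=> v /vlineP [c ->]; rewrite qfZ qr mulr0.
have Hts : tot_sing (P + <[r]>).
  apply: (ts_addv tP tr) => u v Hu /vlineP [c ->].
  by rewrite polarZr H // mulr0.
by have := ts_dim_le3 Hts; rewrite dim_add_line // dP.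
Qed.

Lemma ts3_cap (P Y Z : {vspace 'rV[K]_6}) : ts_sub 3 P -> ts_sub 3 Y ->
  grass_point Z -> (Z <= P)%VS -> (Z <= Y)%VS -> P <> Y ->
  forall v, v \in P -> v \in Y -> v \in Z.
Proof.
move=> [dP _] [dY _] [dZ _] ZP ZY PY v vP vY.
by rewrite -(capv_hyperplane ZP ZY PY) ?dP ?dY ?dZ // memv_cap vP vY.
Qed.

End TotallySingular.

(* Over any field, every line L = <u1, u2> of K^6 is orthogonal to a
   hyperbolic pair (a, s): q a = q s = 0 and b(a, s) = 1.  The singular
   vector a is found inside one of the totally singular coordinate planes
   <e1, e3, e5> and <e2, e4, e6>. *)
Section HyperbolicPair.
Variable K : fieldType.
Implicit Types (u v : 'rV[K]_6) (x : 'rV[K]_3).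

Definition even_part u : 'rV[K]_3 := \row_(i < 3) u 0 (inord (i.*2)).
Definition odd_part u : 'rV[K]_3 := \row_(i < 3) u 0 (inord (i.*2.+1)).

Definition even_embed x : 'rV[K]_6 :=
  \row_(j < 6) (if odd j then 0 else x 0 (inord j./2)).
Definition odd_embed x : 'rV[K]_6 :=
  \row_(j < 6) (if odd j then x 0 (inord j./2) else 0).

Lemma polar_even_embed u x : polar u (even_embed x) = dot3 x (odd_part u).
Proof. rewrite polar_expand dot3_expand !mxE !inordK //=; ring. Qed.

Lemma polar_odd_embed u x : polar u (odd_embed x) = dot3 x (even_part u).
Proof. rewrite polar_expand dot3_expand !mxE !inordK //=; ring. Qed.

Lemma qf_even_embed x : qf (even_embed x) = 0.
Proof. rewrite /qf !mxE !inordK //=; ring. Qed.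

Lemma qf_odd_embed x : qf (odd_embed x) = 0.
Proof. rewrite /qf !mxE !inordK //=; ring. Qed.

Lemma odd_part_even_embed x : odd_part (even_embed x) = 0.
Proof.
by apply/rowP => i; rewrite !mxE inordK ?odd_double //; case: i => [[|[|[|]]]].
Qed.

Lemma even_part_even_embed x : even_part (even_embed x) = x.
Proof.
apply/rowP => i; rewrite !mxE inordK ?odd_double /=; last by case: i => [[|[|[|]]]].
by rewrite doubleK inord_val.
Qed.

Lemma even_part_odd_embed x : even_part (odd_embed x) = 0.
Proof.
by apply/rowP => i; rewrite !mxE inordK ?odd_double //; case: i => [[|[|[|]]]].
Qed.

Lemma odd_part_odd_embed x : odd_part (odd_embed x) = x.
Proof.
apply/rowP => i; rewrite !mxE inordK /=; last by case: i => [[|[|[|]]]].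
by rewrite odd_double /= uphalf_double inord_val.
Qed.

Lemma even_partD u v : even_part (u + v) = even_part u + even_part v.
Proof. by apply/rowP => i; rewrite !mxE. Qed.

Lemma even_partZ c u : even_part (c *: u) = c *: even_part u.
Proof. by apply/rowP => i; rewrite !mxE. Qed.

Lemma free_mixed_line x x' : x != 0 -> x' != 0 ->
  free [:: even_embed x; odd_embed x'].
Proof.
move=> xn0 xn0'; rewrite free_cons /= span_seq1 seq1_free.
have -> : odd_embed x' != 0.
  apply: contraNneq xn0' => a'0; rewrite -(odd_part_odd_embed x') a'0.
  by apply/eqP/rowP => i; rewrite !mxE.
rewrite andbT; apply/negP => /vlineP [c Hc]; have := congr1 even_part Hc.
rewrite even_partZ even_part_even_embed even_part_odd_embed scaler0 => x0.
by move: xn0; rewrite x0 eqxx.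
Qed.

(* The line spanned by a nonzero even vector a and a nonzero odd vector a'
   has a singular vector e orthogonal to it outside it: take e even (so that
   e is orthogonal to a), orthogonal to a', and with a zero coordinate where
   a has a nonzero one. *)
Lemma singular_perp_mixed_line x x' : x != 0 -> x' != 0 -> exists e,
  [/\ qf e = 0, polar (even_embed x) e = 0, polar (odd_embed x') e = 0 &
      e \notin <<[:: even_embed x; odd_embed x']>>%VS].
Proof.
move=> xn0 xn0'; have [j xj] : exists j, x 0 j != 0 by apply/rV0Pn.
have [z zn0 [hz1 hz2]] := common_zero3 (odd_part (odd_embed x')) (delta_mx 0 j).
have ze : z 0 j = 0 by move: hz2; rewrite /dot3 trmx_delta -colE mxE.
exists (even_embed z); split.
- exact: qf_even_embed.
- by rewrite polar_even_embed odd_part_even_embed /dot3 trmx0 mulmx0 mxE.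
- by rewrite polar_even_embed.
- apply/negP => /mem_span2 [c [d Hcd]]; have := congr1 even_part Hcd.
  rewrite even_partD !even_partZ !even_part_even_embed even_part_odd_embed.
  rewrite scaler0 addr0 => Hz.
  have : c * x 0 j = 0 by rewrite -ze Hz mxE.
  move/eqP; rewrite mulf_eq0 (negPf xj) orbF => /eqP c0.
  by move: zn0; rewrite Hz c0 scale0r eqxx.
Qed.

(* Every line L = <u1, u2> has a singular vector orthogonal to it outside it:
   the even and the odd coordinate planes both meet the orthogonal of L, and
   if both intersections lie in L they span it. *)
Lemma singular_perp_vector u1 u2 : free [:: u1; u2] ->
  exists a, [/\ qf a = 0, polar u1 a = 0, polar u2 a = 0 & free [:: a; u1; u2]].
Proof.
move=> fu; set L := <<[:: u1; u2]>>%VS.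
have [x xn0 [hx1 hx2]] := common_zero3 (odd_part u1) (odd_part u2).
case: (boolP (even_embed x \in L)) => [aL|aL]; last first.
  by exists (even_embed x); rewrite qf_even_embed !polar_even_embed free_cons aL fu.
have [x' xn0' [hy1 hy2]] := common_zero3 (even_part u1) (even_part u2).
case: (boolP (odd_embed x' \in L)) => [a'L|a'L]; last first.
  by exists (odd_embed x'); rewrite qf_odd_embed !polar_odd_embed free_cons a'L fu.
have faa := free_mixed_line xn0 xn0'.
have Laa : <<[:: even_embed x; odd_embed x']>>%VS = L.
  apply/eqP; rewrite eqEdim (eqP fu) (eqP faa) leqnn andbT.
  by apply/span_subvP => v; rewrite !inE => /orP [] /eqP ->.
have [e [qe pae pa'e eL]] := singular_perp_mixed_line xn0 xn0'.
have eperp : forall u, u \in L -> polar u e = 0.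
  move=> u; rewrite polarC -Laa; apply: polar_span => v.
  by rewrite !inE => /orP [] /eqP ->; rewrite polarC.
exists e; split => //; last by rewrite free_cons fu andbT -/L -Laa eL.
- by apply: eperp; rewrite memv_span // mem_head.
- by apply: eperp; rewrite memv_span // !inE eqxx orbT.
Qed.

(* Non-degeneracy: independent vectors admit a vector with prescribed
   polar values 1, 0, 0. *)
Lemma dual_vector a u1 u2 : free [:: a; u1; u2] ->
  exists b, [/\ polar a b = 1, polar u1 b = 0 & polar u2 b = 0].
Proof.
move=> /row_free_rows_mx /row_freeP [B HB].
pose b : 'rV[K]_6 := \row_j B (pair_swap j) 0.
have key : forall i : 'I_3, polar [:: a; u1; u2]`_i b = (1%:M : 'M[K]_3) i 0.
  move=> i; rewrite -HB mxE /polar; apply: eq_bigr => k _.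
  by rewrite !mxE pair_swapK.
exists b; split.
- by move: (key 0); rewrite mxE /= => ->.
- by move: (key (@Ordinal 3 1 isT)); rewrite mxE /=.
- by move: (key (@Ordinal 3 2 isT)); rewrite mxE /=.
Qed.

Lemma hyperbolic_pair u1 u2 : free [:: u1; u2] ->
  exists a s, [/\ qf a = 0, qf s = 0, polar a s = 1 &
      [/\ polar u1 a = 0, polar u2 a = 0, polar u1 s = 0 & polar u2 s = 0]].
Proof.
move=> fu.
have [a [qa p1a p2a fa]] := singular_perp_vector fu.
have [b [pab p1b p2b]] := dual_vector fa.
exists a, (b - qf b *: a); split => //.
- rewrite qfD qfN qfZ qa mulr0 addr0 polarNr polarZr (polarC b a) pab; ring.
- rewrite polarDr polarNr polarZr pab polarxx qa; ring.
- split => //.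
  + by rewrite polarDr polarNr polarZr p1b p1a; ring.
  + by rewrite polarDr polarNr polarZr p2b p2a; ring.
Qed.

End HyperbolicPair.

(* A totally singular 3-space Y through a totally singular line L = <r1, r2>
   lies in the orthogonal L^perp = L + <a, s> of L, for a hyperbolic pair
   (a, s) orthogonal to L; since q(c1 a + c2 s + l) = c1 c2 for l in L, Y must
   contain a or s. *)
Section PlanesThroughLine.
Variable K : fieldType.
Variables (r1 r2 a s : 'rV[K]_6).
Hypotheses (fr : free [:: r1; r2]) (qr1 : qf r1 = 0) (qr2 : qf r2 = 0)
  (p12 : polar r1 r2 = 0).
Hypotheses (qa : qf a = 0) (qs : qf s = 0) (pas : polar a s = 1)
  (pa1 : polar a r1 = 0) (pa2 : polar a r2 = 0)
  (ps1 : polar s r1 = 0) (ps2 : polar s r2 = 0).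

Let L := <<[:: r1; r2]>>%VS.

Lemma polar_a_line : forall v, v \in L -> polar a v = 0.
Proof. by apply: polar_span => v; rewrite !inE => /orP [/eqP ->|/eqP ->]. Qed.

Lemma polar_s_line : forall v, v \in L -> polar s v = 0.
Proof. by apply: polar_span => v; rewrite !inE => /orP [/eqP ->|/eqP ->]. Qed.

Lemma free_hyperbolic_line : free [:: a; s; r1; r2].
Proof.
have s_notin : s \notin L.
  by apply/negP => /polar_a_line; rewrite pas => /eqP; rewrite oner_eq0.
rewrite free_cons free_cons fr s_notin !andbT; apply/negP => aS.
have oS : forall v, v \in [:: s; r1; r2] -> polar s v = 0.
  move=> v; rewrite inE => /orP [/eqP ->|vL]; first by rewrite polarxx qs mul0rn.
  by apply: polar_s_line; apply: memv_span.
by have := polar_span oS aS; rewrite polarC pas => /eqP; rewrite oner_eq0.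
Qed.

Lemma perp_line_span y : polar r1 y = 0 -> polar r2 y = 0 ->
  y \in <<[:: a; s; r1; r2]>>%VS.
Proof.
move=> p1y p2y; apply/negPn/negP => yS.
have := @orthogonal_free_size _ [:: r1; r2] [:: y; a; s; r1; r2] fr.
rewrite free_cons yS free_hyperbolic_line => /(_ isT) H.
suff : (2 + 5 <= 6)%N by [].
have orth : forall r, r \in [:: r1; r2] ->
    all (fun v => polar r v == 0) [:: y; a; s; r1; r2].
  move=> r; rewrite !inE => /orP [] /eqP -> /=.
  - by rewrite p1y (polarC r1 a) (polarC r1 s) pa1 ps1 polarxx qr1 p12 mul0rn eqxx.
  - by rewrite p2y (polarC r2 a) (polarC r2 s) pa2 ps2 polarxx qr2
      (polarC r2 r1) p12 mul0rn eqxx.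
by apply: H => u v /orth /allP H /H /eqP.
Qed.

Lemma ts3_through_line (Y : {vspace 'rV[K]_6}) : ts_sub 3 Y ->
  r1 \in Y -> r2 \in Y -> a \in Y \/ s \in Y.
Proof.
move=> [dY tY] r1Y r2Y.
have LY : (L <= Y)%VS by apply/span_subvP => v; rewrite !inE => /orP [] /eqP ->.
have [y yY yL] : exists2 y, y \in Y & y \notin L.
  by apply/subvPn/negP => /dimvS; rewrite dY (eqP fr).
have := perp_line_span (ts_polar tY r1Y yY) (ts_polar tY r2Y yY).
move=> /mem_span_cons [c1 [w [/mem_span_cons [c2 [l [lL ->]]] Ey]]].
have qy : qf y = c1 * c2.
  rewrite Ey !qfD !qfZ !polarDr !polarZl !polarZr qa qs pas.
  rewrite (tY l (subvP LY _ lL)) polar_a_line // polar_s_line //; ring.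
move: qy; rewrite (tY y yY) => /esym /eqP; rewrite mulf_eq0.
have yLc : forall c (z : 'rV[K]_6), c != 0 -> y = c *: z + l -> z \in Y.
  move=> c z cn0 Ez; have -> : z = c^-1 *: (y - l).
    by rewrite Ez addrK scalerA mulVf // scale1r.
  by rewrite memvZ // memvB // (subvP LY).
case/orP => /eqP c0.
- right; apply: (yLc c2); last by rewrite Ey c0 scale0r add0r.
  by apply: contraNneq yL => c20; rewrite Ey c0 c20 !scale0r !add0r.
- left; apply: (yLc c1); last by rewrite Ey c0 scale0r add0r.
  by apply: contraNneq yL => c10; rewrite Ey c0 c10 !scale0r !add0r.
Qed.

End PlanesThroughLine.

Section Combinations.
Variable K : fieldType.
Implicit Type x : 'rV[K]_3.

Definition comb3 x (v1 v2 v3 : 'rV[K]_6) : 'rV[K]_6 :=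
  x 0 (inord 0) *: v1 + x 0 (inord 1) *: v2 + x 0 (inord 2) *: v3.

Lemma mem_span3_comb (w v1 v2 v3 : 'rV[K]_6) : w \in <<[:: v1; v2; v3]>>%VS ->
  exists x, w = comb3 x v1 v2 v3.
Proof.
move=> /mem_span3 [c1 [c2 [c3 ->]]].
by exists (\row_(i < 3) [:: c1; c2; c3]`_i); rewrite /comb3 !mxE !inordK.
Qed.

Lemma comb3_mem (U : {vspace 'rV[K]_6}) x (v1 v2 v3 : 'rV[K]_6) :
  v1 \in U -> v2 \in U -> v3 \in U -> comb3 x v1 v2 v3 \in U.
Proof. by move=> *; apply: memvD; [apply: memvD|]; apply: memvZ. Qed.

Lemma comb3_eq0 x (v1 v2 v3 : 'rV[K]_6) :
  free [:: v1; v2; v3] -> comb3 x v1 v2 v3 = 0 -> x = 0.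
Proof. by move=> fv /(free3_coef0 fv) [? ? ?]; apply: row3_eq0. Qed.

Lemma polar_comb3 x (v1 v2 v3 y : 'rV[K]_6) :
  polar (comb3 x v1 v2 v3) y = \sum_i x 0 i * polar [:: v1; v2; v3]`_i y.
Proof. by rewrite big_ord3 /comb3 !polarDl !polarZl !inordK. Qed.

Lemma comb3E x (v1 v2 v3 : 'rV[K]_6) k :
  comb3 x v1 v2 v3 0 k = dot3 x (\row_(i < 3) [:: v1; v2; v3]`_i 0 k).
Proof. by rewrite dot3_expand !mxE !inordK. Qed.

End Combinations.

Section Rationality.
Variables (F0 F : fieldType) (f : {rmorphism F0 -> F}).
Local Notation mf := (map_mx f).

Lemma qf_map (u : 'rV[F0]_6) : qf (mf u) = f (qf u).
Proof. by rewrite /qf !mxE !rmorphD !rmorphM. Qed.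

Lemma polar_map (u v : 'rV[F0]_6) : polar (mf u) (mf v) = f (polar u v).
Proof. by rewrite !polar_expand !mxE !rmorphD !rmorphM. Qed.

Lemma span_map (x : 'rV[F0]_6) X : x \in <<X>>%VS -> mf x \in <<map mf X>>%VS.
Proof.
elim: X x => [|v X IH] x.
  by rewrite span_nil memv0 => /eqP ->; rewrite map_mx0 mem0v.
move=> /mem_span_cons [c [w [Hw ->]]].
rewrite map_mxD map_mxZ /= span_cons.
by apply: memv_add; [apply: memvZ; apply: memv_line | apply: IH].
Qed.

Lemma free_unmap (X : seq 'rV[F0]_6) : free (map mf X) -> free X.
Proof.
elim: X => [_|v X IH] /=; first exact: nil_free.
rewrite !free_cons => /andP [Hn Hf].
by apply/andP; split; [apply: contra Hn; apply: span_map | exact: IH].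
Qed.

Lemma free2_map (b1 b2 : 'rV[F0]_6) : free [:: b1; b2] -> free [:: mf b1; mf b2].
Proof.
rewrite !free_cons !span_nil !memv0 !nil_free !andbT !span_seq1 map_mx_eq0.
move=> /andP [n1 n2]; rewrite n2 andbT; apply: contra n1 => /vlineP [c E].
have [j bj] : exists j, b2 0 j != 0 by apply/rV0Pn.
have Ej := congr1 (fun M : 'rV[F]_6 => M 0 j) E; rewrite /= !mxE in Ej.
have Ec : c = f (b1 0 j / b2 0 j) by rewrite fmorph_div Ej mulfK // fmorph_eq0.
apply/vlineP; exists (b1 0 j / b2 0 j).
by apply: (@map_mx_inj _ _ f); rewrite map_mxZ -Ec.
Qed.

(* A linear system with coefficients in F0 that has a nonzero solution over F
   has one over F0 (the rank does not change under field extension). *)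
Lemma rational_kernel m n (C : 'M[F0]_(m, n)) :
  (exists2 w : 'rV[F]_m, w != 0 & w *m map_mx f C = 0) ->
  exists2 w0 : 'rV[F0]_m, w0 != 0 & w0 *m C = 0.
Proof.
move=> [w wn0 Hw]; apply: left_kernel_nonzero; rewrite -(row_free_map f).
apply/negP => rf.
have : w *m map_mx f C = 0 *m map_mx f C by rewrite Hw mul0mx.
by move/(row_free_inj rf) => w0; move: wn0; rewrite w0 eqxx.
Qed.

Definition rat_point (Z : {vspace 'rV[F]_6}) : Prop :=
  exists2 u : 'rV[F0]_6, u != 0 & mf u \in Z.

(* P contains three independent rational vectors; for a totally singular
   3-space this says that P is the F-span of a plane of Q^+(5, F0). *)
Definition rat_plane (P : {vspace 'rV[F]_6}) : Prop :=
  exists u1 u2 u3 : 'rV[F0]_6,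
  [/\ free [:: mf u1; mf u2; mf u3], mf u1 \in P, mf u2 \in P & mf u3 \in P].

Definition on_rat_plane (Z : {vspace 'rV[F]_6}) : Prop :=
  exists P, [/\ ts_sub 3 P, (Z <= P)%VS & rat_plane P].

(* A totally singular 3-space containing two independent rational vectors is
   a rational plane: over F0 they span a line with a hyperbolic pair (a, s)
   orthogonal to it, and the 3-space contains a or s. *)
Lemma rat_plane_of_line (Y : {vspace 'rV[F]_6}) u1 u2 : ts_sub 3 Y ->
  mf u1 \in Y -> mf u2 \in Y -> free [:: mf u1; mf u2] -> rat_plane Y.
Proof.
move=> [dY tY] u1Y u2Y fr.
have fu : free [:: u1; u2] by apply: free_unmap.
have [a [s [qa qs pas [p1a p2a p1s p2s]]]] := hyperbolic_pair fu.
have orth x y : polar x y = 0 -> polar (mf y) (mf x) = 0.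
  by move=> pxy; rewrite polar_map polarC pxy rmorph0.
have qr1 := tY _ u1Y; have qr2 := tY _ u2Y; have pr := ts_polar tY u1Y u2Y.
have qa' : qf (mf a) = 0 by rewrite qf_map qa rmorph0.
have qs' : qf (mf s) = 0 by rewrite qf_map qs rmorph0.
have pas' : polar (mf a) (mf s) = 1 by rewrite polar_map pas rmorph1.
have pa1 := orth _ _ p1a; have pa2 := orth _ _ p2a.
have ps1 := orth _ _ p1s; have ps2 := orth _ _ p2s.
have fL := free_hyperbolic_line fr qs' pas' pa1 pa2 ps1 ps2.
case: (ts3_through_line fr qr1 qr2 pr qa' qs' pas' pa1 pa2 ps1 ps2 (conj dY tY) u1Y u2Y).
- move=> aY; exists a, u1, u2; split => //; apply: (catr_free (X := [:: mf s])).
  by rewrite (perm_free (permEl (perm_catCA [:: mf s] [:: mf a] [:: mf u1; mf u2]))).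
- by move=> sY; exists s, u1, u2; split => //; exact: (catr_free (X := [:: mf a])).
Qed.

Lemma map_comb3 (x : 'rV[F0]_3) (b1 b2 b3 : 'rV[F0]_6) :
  mf (comb3 x b1 b2 b3) = comb3 (map_mx f x) (mf b1) (mf b2) (mf b3).
Proof. by rewrite /comb3 !map_mxD !map_mxZ !mxE. Qed.

Lemma comb3_neq0 (x : 'rV[F0]_3) (b1 b2 b3 : 'rV[F0]_6) :
  free [:: mf b1; mf b2; mf b3] -> x != 0 -> comb3 x b1 b2 b3 != 0.
Proof.
move=> fb; apply: contraNneq => E.
have /(comb3_eq0 fb)/eqP : comb3 (map_mx f x) (mf b1) (mf b2) (mf b3) = 0.
  by rewrite -map_comb3 E map_mx0.
by rewrite map_mx_eq0.
Qed.

(* Two rational totally singular 3-spaces that meet nontrivially contain a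
   common nonzero rational vector: the coordinates, on a rational basis of
   P1, of the vectors of P1 orthogonal to P2 solve a linear system with
   coefficients in F0, and P2 is maximal totally singular. *)
Lemma rat_planes_meet (P1 P2 : {vspace 'rV[F]_6}) : ts_sub 3 P1 -> ts_sub 3 P2 ->
  rat_plane P1 -> rat_plane P2 -> (P1 :&: P2 != 0)%VS -> rat_point (P1 :&: P2).
Proof.
move=> [dP1 tP1] [dP2 tP2] [a1 [a2 [a3 [fa A1 A2 A3]]]] [b1 [b2 [b3 [fb B1 B2 B3]]]] nz.
have [|x /memv_capP [xP1 xP2] xn0] := nonzero_vector (U := (P1 :&: P2)%VS).
  by rewrite lt0n dimv_eq0.
have EP1 := span3_full dP1 fa A1 A2 A3; have EP2 := span3_full dP2 fb B1 B2 B3.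
have [w Ex] : exists w, x = comb3 w (mf a1) (mf a2) (mf a3).
  by apply: mem_span3_comb; rewrite EP1.
pose C : 'M[F0]_3 := \matrix_(i, j) polar [:: a1; a2; a3]`_i [:: b1; b2; b3]`_j.
have wn0 : w != 0.
  by apply: contraNneq xn0 => w0; rewrite Ex w0 /comb3 !mxE !scale0r !addr0.
have wC : w *m map_mx f C = 0.
  apply/rowP => j; have Bj : mf [:: b1; b2; b3]`_j \in P2.
    by case: j => [[|[|[|]]] ?].
  rewrite !mxE -[RHS](ts_polar tP2 xP2 Bj) Ex polar_comb3.
  by apply: eq_bigr => i _; rewrite !mxE -polar_map; case: i => [[|[|[|]]] ?].
have [w0 w0n0 w0C] := rational_kernel (ex_intro2 _ _ w wn0 wC).
pose x0 := comb3 w0 a1 a2 a3.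
have x0P1 : mf x0 \in P1 by rewrite map_comb3 comb3_mem.
have x0b (j : 'I_3) : polar x0 [:: b1; b2; b3]`_j = 0.
  have := congr1 (fun M : 'rV[F0]_3 => M 0 j) w0C; rewrite !mxE => <-.
  by rewrite polar_comb3; apply: eq_bigr => i _; rewrite mxE.
exists x0; first exact: comb3_neq0.
rewrite memv_cap x0P1; apply: (ts3_maximal (conj dP2 tP2) (tP1 _ x0P1)) => p.
rewrite -EP2 polarC; apply: polar_span => v; rewrite !inE.
move=> /or3P [] /eqP ->; rewrite polar_map -(rmorph0 f); congr (f _).
- exact: (x0b (@Ordinal 3 0 isT)).
- exact: (x0b (@Ordinal 3 1 isT)).
- exact: (x0b (@Ordinal 3 2 isT)).
Qed.

Section Pencil.
Variables (X Y Z1 Z2 : {vspace 'rV[F]_6}).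
Hypotheses (tsX : ts_sub 1 X) (tsY : ts_sub 3 Y).
Hypotheses (pZ1 : grass_point Z1) (pZ2 : grass_point Z2) (Z12 : Z1 <> Z2).
Hypotheses (XZ1 : (X <= Z1)%VS) (Z1Y : (Z1 <= Y)%VS).
Hypotheses (XZ2 : (X <= Z2)%VS) (Z2Y : (Z2 <= Y)%VS).

Lemma pencil_cap v : v \in Z1 -> v \in Z2 -> v \in X.
Proof.
have <- : (Z1 :&: Z2)%VS = X.
  by apply: capv_hyperplane; rewrite ?pZ1.1 ?pZ2.1 ?tsX.1.
by rewrite memv_cap => -> ->.
Qed.

Lemma pencil_sum : (Y <= Z1 + Z2)%VS.
Proof.
have S : (Z1 + Z2 <= Y)%VS by rewrite subv_add Z1Y Z2Y.
have := dimv_sum_cap Z1 Z2; rewrite (capv_hyperplane XZ1 XZ2) ?pZ1.1 ?pZ2.1 ?tsX.1 //.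
move=> E; suff /eqP -> : (Z1 + Z2)%VS == Y by [].
by rewrite eqEdim S tsY.1; lia.
Qed.

Lemma pencil_two_points u1 u2 : mf u1 \in Z1 -> mf u1 \notin X ->
  mf u2 \in Z2 -> mf u2 \notin X -> rat_plane Y.
Proof.
move=> H1 n1 H2 n2.
apply: (rat_plane_of_line tsY (subvP Z1Y _ H1) (subvP Z2Y _ H2)).
rewrite free_cons span_seq1 seq1_free; apply/andP; split.
- by apply: contra n1 => /vlineP [c E]; apply: pencil_cap H1 _; rewrite E memvZ.
- by apply: contraNneq n2 => ->; exact: mem0v.
Qed.

(* A rational vector in Z1 and a rational plane P through Z2: P contains a
   rational vector s orthogonal to u; s lies in Z2, since otherwise u would be
   orthogonal to P = Z2 + <s>, hence in P, hence in P :&: Y = Z2. *)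
Lemma pencil_point_plane u : u != 0 -> mf u \in Z1 -> on_rat_plane Z2 ->
  rat_point X \/ rat_plane Y.
Proof.
move=> un0 uZ1 [P [tsP Z2P [b1 [b2 [b3 [fb B1 B2 B3]]]]]].
have [dZ2 tZ2] := pZ2; have [dP tP] := tsP; have [dY tY] := tsY.
case: (boolP (mf u \in X)) => [uX|uX]; first by left; exists u.
case: (eqVneq P Y) => [<-|PY]; first by right; exists b1, b2, b3.
have uY := subvP Z1Y _ uZ1.
have [x xn0 [us _]] := common_zero3 (\row_(i < 3) polar u [:: b1; b2; b3]`_i) 0.
pose s := comb3 x b1 b2 b3.
have pus : polar (mf s) (mf u) = 0.
  rewrite polar_map; suff -> : polar s u = 0 by rewrite rmorph0.
  by rewrite -us dot3_expand polar_comb3 big_ord3 !mxE !inordK //= !(polarC u).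
have sP : mf s \in P by rewrite map_comb3 comb3_mem.
have sZ2 : mf s \in Z2.
  apply/negPn/negP => sZ2.
  have EP : (Z2 + <[mf s]>)%VS = P.
    apply/eqP; rewrite eqEdim dim_add_line // dZ2 dP leqnn andbT subv_add Z2P /=.
    by rewrite -memvE.
  have uP : mf u \in P.
    apply: (ts3_maximal tsP (tY _ uY)) => p.
    rewrite -EP => /memv_addP [z zZ2 [w /vlineP [k ->] ->]].
    by rewrite polarDl polarZl pus mulr0 addr0 (ts_polar tY (subvP Z2Y _ zZ2) uY).
  have uZ2 := ts3_cap tsP tsY pZ2 Z2P Z2Y (elimN eqP PY) uP uY.
  by move: uX; rewrite (pencil_cap uZ1 uZ2).
case: (boolP (mf s \in X)) => [sX|sX].
  by left; exists s => //; exact: comb3_neq0.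
by right; exact: (pencil_two_points uZ1 uX sZ2 sX).
Qed.

(* Rational planes P1 <> Y through Z1 and P2 <> Y through Z2 meet exactly in
   X: P1 :&: P2 is orthogonal to Z1 + Z2 = Y, and meets Y inside Z1 :&: Z2. *)
Lemma pencil_planes_cap P1 P2 : ts_sub 3 P1 -> ts_sub 3 P2 ->
  (Z1 <= P1)%VS -> (Z2 <= P2)%VS -> P1 <> Y -> P2 <> Y -> (P1 :&: P2)%VS = X.
Proof.
move=> tsP1 tsP2 Z1P1 Z2P2 P1Y P2Y.
have [dP1 tP1] := tsP1; have [dP2 tP2] := tsP2; have [dY tY] := tsY.
pose W := (P1 :&: P2)%VS.
have XW : (X <= W)%VS by rewrite subv_cap (subv_trans XZ1 Z1P1) (subv_trans XZ2 Z2P2).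
suff dW : (\dim W <= 1)%N by apply/eqP; rewrite eq_sym eqEdim XW tsX.1 dW.
rewrite leqNgt; apply/negP => dW.
have tW : tot_sing W by move=> v /memv_capP [vP1 _]; exact: tP1.
have tWY : tot_sing (W + Y).
  apply: (ts_addv tW tY) => v y /memv_capP [vP1 vP2] yY.
  have := subvP pencil_sum _ yY => /memv_addP [z1 z1Z [z2 z2Z ->]].
  rewrite polarDr (ts_polar tP1 vP1 (subvP Z1P1 _ z1Z)).
  by rewrite (ts_polar tP2 vP2 (subvP Z2P2 _ z2Z)) addr0.
have WYX : ((W :&: Y) <= X)%VS.
  apply/subvP => v /memv_capP [/memv_capP [vP1 vP2] vY].
  by apply: pencil_cap; [exact: (ts3_cap tsP1 tsY pZ1 Z1P1 Z1Y P1Y) |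
                         exact: (ts3_cap tsP2 tsY pZ2 Z2P2 Z2Y P2Y)].
move: (dimvS WYX) (dimv_sum_cap W Y) (ts_dim_le3 tWY) dW; rewrite tsX.1 dY.
by move: (\dim (W :&: Y)) (\dim (W + Y)) (\dim W) => n1 n2 n3; lia.
Qed.

(* Rational planes through Z1 and Z2, both different from Y, meet in X. *)
Lemma pencil_two_planes : on_rat_plane Z1 -> on_rat_plane Z2 ->
  rat_point X \/ rat_plane Y.
Proof.
move=> [P1 [tsP1 Z1P1 rP1]] [P2 [tsP2 Z2P2 rP2]].
case: (eqVneq P1 Y) => [<-|P1Y]; first by right.
case: (eqVneq P2 Y) => [<-|P2Y]; first by right.
have capX := pencil_planes_cap tsP1 tsP2 Z1P1 Z2P2 (elimN eqP P1Y) (elimN eqP P2Y).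
left; rewrite -capX; apply: rat_planes_meet => //.
by rewrite capX -dimv_eq0 tsX.1.
Qed.

End Pencil.

Lemma pencil_rational (X Y Z1 Z2 : {vspace 'rV[F]_6}) :
  ts_sub 1 X -> ts_sub 3 Y -> grass_point Z1 -> grass_point Z2 -> Z1 <> Z2 ->
  (X <= Z1)%VS -> (Z1 <= Y)%VS -> (X <= Z2)%VS -> (Z2 <= Y)%VS ->
  rat_point Z1 \/ on_rat_plane Z1 -> rat_point Z2 \/ on_rat_plane Z2 ->
  rat_point X \/ rat_plane Y.
Proof.
move=> tsX tsY pZ1 pZ2 Z12 XZ1 Z1Y XZ2 Z2Y.
have Z21 : Z2 <> Z1 by move/esym.
case=> [[u1 u1n0 H1]|R1]; case=> [[u2 u2n0 H2]|R2].
- case: (boolP (mf u1 \in X)) => [u1X|u1X]; first by left; exists u1.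
  case: (boolP (mf u2 \in X)) => [u2X|u2X]; first by left; exists u2.
  by right; exact: (pencil_two_points tsX tsY pZ1 pZ2 Z12 XZ1 Z1Y XZ2 Z2Y H1 u1X H2).
- exact: (pencil_point_plane tsX tsY pZ1 pZ2 Z12 XZ1 Z1Y XZ2 Z2Y u1n0 H1 R2).
- exact: (pencil_point_plane tsX tsY pZ2 pZ1 Z21 XZ2 Z2Y XZ1 Z1Y u2n0 H2 R1).
- exact: (pencil_two_planes tsX tsY pZ1 pZ2 Z12 XZ1 Z1Y XZ2 Z2Y R1 R2).
Qed.

End Rationality.

Section NotGenerated.
Variables (F0 F : fieldType) (f : {rmorphism F0 -> F}).
Local Notation mf := (map_mx f).

Definition rat_locus (Z : {vspace 'rV[F]_6}) : Prop :=
  grass_point Z /\ (rat_point f Z \/ on_rat_plane f Z).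

Lemma rat_locus_subspace : grass_subspace rat_locus.
Proof.
split=> [Z [] //|l [X [Y [tsX tsY _ Hl]]] [Z1 [Z2 [Z12 l1 T1 l2 T2]]] Z lZ].
have [g1 [XZ1 Z1Y]] := (Hl Z1).1 l1.
have [g2 [XZ2 Z2Y]] := (Hl Z2).1 l2.
have [g [XZ ZY]] := (Hl Z).1 lZ.
split=> //; case: (pencil_rational tsX tsY g1 g2 Z12 XZ1 Z1Y XZ2 Z2Y T1.2 T2.2).
- by move=> [u un0 uX]; left; exists u => //; exact: (subvP XZ).
- by move=> RY; right; exists Y.
Qed.

Lemma ext_lines_rat_locus (W : {vspace 'rV[F]_6}) : ext_lines f W -> rat_locus W.
Proof.
move=> [L [[dL tL] ->]]; rewrite /ext_span.
have : size (vbasis L) = 2%N by rewrite size_tuple.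
have fb := basis_free (vbasisP L).
have mb : forall v, v \in tval (vbasis L) -> v \in L by move=> v /vbasis_mem.
move: (tval (vbasis L)) fb mb => [|b1 [|b2 [|]]] //= fb mb _.
have b1L : b1 \in L by apply: mb; rewrite mem_head.
have b2L : b2 \in L by apply: mb; rewrite !inE eqxx orbT.
split; [split|].
- by rewrite (eqP (free2_map f fb)).
- move=> v /mem_span2 [c1 [c2 ->]].
  rewrite qfD !qfZ polarZl polarZr !(qf_map f) (polar_map f) (tL _ b1L) (tL _ b2L).
  by rewrite (ts_polar tL b1L b2L) !rmorph0 !mulr0 !addr0.
- left; exists b1; first by apply: (free_not0 fb); rewrite mem_head.
  by apply: memv_span; rewrite mem_head.
Qed.

(* The point <e3 + t e6, e5 - t e4> (coordinates numbered from 1). *)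
Definition z1 (t : F) : 'rV[F]_6 := \row_(j < 6) [:: 0; 0; 1; 0; 0; t]`_j.
Definition z2 (t : F) : 'rV[F]_6 := \row_(j < 6) [:: 0; 0; 0; -t; 1; 0]`_j.
Definition irr_point (t : F) : {vspace 'rV[F]_6} := <<[:: z1 t; z2 t]>>%VS.

Lemma irr_point_grass (t : F) : grass_point (irr_point t).
Proof.
have z2n0 : z2 t != 0.
  apply/negP => /eqP H; have := congr1 (fun M : 'rV[F]_6 => M 0 (inord 4)) H.
  by rewrite /= !mxE inordK //= => /eqP; rewrite oner_eq0.
have fz : free [:: z1 t; z2 t].
  rewrite free_cons span_seq1 seq1_free z2n0 andbT.
  apply/negP => /vlineP [c H]; have := congr1 (fun M : 'rV[F]_6 => M 0 (inord 2)) H.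
  by rewrite /= !mxE inordK //= mulr0 => /eqP; rewrite oner_eq0.
split; first by rewrite /irr_point (eqP fz).
by move=> v /mem_span2 [c1 [c2 ->]]; rewrite /qf !mxE !inordK //=; ring.
Qed.

(* A rational vector c1 z1 + c2 z2 would exhibit t as a ratio of rationals
   unless c1 = c2 = 0. *)
Lemma irr_point_no_rat_point (t : F) : (forall x, f x <> t) ->
  ~ rat_point f (irr_point t).
Proof.
move=> Ht [u un0 /mem_span2 [c1 [c2 E]]].
have e k := congr1 (fun M : 'rV[F]_6 => M 0 (inord k)) E.
move: (e 0%N) (e 1%N) (e 2%N) (e 3%N) (e 4%N) (e 5%N).
rewrite /= !mxE !inordK //= !mulr0 !mulr1 !addr0 !add0r => e0 e1 e2 e3 e4 e5.
have c10 : c1 = 0.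
  apply/eqP/negPn/negP => c1n0; apply: (Ht (u 0 (inord 5) / u 0 (inord 2))).
  by rewrite fmorph_div e5 e2 mulrC mulKf.
have c20 : c2 = 0.
  apply/eqP/negPn/negP => c2n0; apply: (Ht (- u 0 (inord 3) / u 0 (inord 4))).
  by rewrite fmorph_div rmorphN e3 e4 mulrN opprK mulrC mulKf.
move/negP: un0; apply; apply/eqP; apply: row6_eq0 => k.
case: k => [|[|[|[|[|[|k]]]]]] // _; apply: (fmorph_inj f); rewrite rmorph0.
- by rewrite e0.
- by rewrite e1.
- by rewrite e2 c10.
- by rewrite e3 c20 mul0r.
- by rewrite e4 c20.
- by rewrite e5 c10 mul0r.
Qed.

(* A rational plane Y through the point contains a nonzero rational vector w
   with vanishing first two coordinates; w is not in the point, so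
   Y = <z1, z2, w> is orthogonal to the singular vector e1, which would then
   lie in Y although every vector of Y has first coordinate 0. *)
Lemma irr_point_not_on_rat_plane (t : F) : (forall x, f x <> t) ->
  ~ on_rat_plane f (irr_point t).
Proof.
move=> Ht [Y [[dY tY] ZY [a1 [a2 [a3 [fa A1 A2 A3]]]]]].
have [x xn0 [h0 h1]] := common_zero3 (\row_i [:: a1; a2; a3]`_i 0 (inord 0))
                                     (\row_i [:: a1; a2; a3]`_i 0 (inord 1)).
have [w [w0 w1 wn0 wY]] : exists w : 'rV[F0]_6,
    [/\ w 0 (inord 0) = 0, w 0 (inord 1) = 0, w != 0 & mf w \in Y].
  exists (comb3 x a1 a2 a3); split; rewrite ?comb3E //.
  - exact: comb3_neq0 fa xn0.
  - by rewrite map_comb3 comb3_mem.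
have wZ : mf w \notin irr_point t.
  by apply/negP => wZ; apply: (irr_point_no_rat_point Ht); exists w.
have EY : (irr_point t + <[mf w]>)%VS = Y.
  apply/eqP; rewrite eqEdim dim_add_line // (irr_point_grass t).1 dY leqnn andbT.
  by rewrite subv_add ZY -memvE.
pose e1 : 'rV[F]_6 := \row_(j < 6) [:: 1; 0; 0; 0; 0; 0]`_j.
have : e1 \in Y.
  apply: (ts3_maximal (conj dY tY)); first by rewrite /qf !mxE !inordK //=; ring.
  move=> p; rewrite -EY => /memv_addP [z /mem_span2 [d1 [d2 ->]] [_ /vlineP [k ->] ->]].
  rewrite polar_expand !mxE !inordK //= w1 rmorph0; ring.
rewrite -EY => /memv_addP [z /mem_span2 [d1 [d2 ->]] [_ /vlineP [k ->] E]].
have := congr1 (fun M : 'rV[F]_6 => M 0 (inord 0)) E.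
rewrite /= !mxE !inordK //= w0 rmorph0 !mulr0 !addr0 => /eqP.
by rewrite oner_eq0.
Qed.

End NotGenerated.

Theorem mainTheorem5 (F F0 : fieldType) (f : {rmorphism F0 -> F}) :
  ~ (forall y : F, exists x : F0, f x = y) -> ~ F0_generated f.
Proof.
move=> nsurj gen.
have [t Ht] : exists t : F, forall x, f x <> t.
  apply: NNPP => H; apply: nsurj => y; apply: NNPP => Hy; apply: H.
  by exists y => x Hx; apply: Hy; exists x.
have [_ [] ] := gen _ (irr_point_grass t) _ (rat_locus_subspace f)
  (@ext_lines_rat_locus _ _ f).
- exact: irr_point_no_rat_point.
- exact: irr_point_not_on_rat_plane.
Qed.
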